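(* There exists an efficient, hence regret-free, strategy.
   Context: Let $\mathcal{X}$ be a finite set of alternatives. A proto-ranking is an irreflexive and transitive binary relation on $\mathcal{X}$; a ranking is a total proto-ranking; a tournament is a total and asymmetric binary relation on $\mathcal{X}$. The chair has a fixed preference $\succ$, a ranking on $\mathcal{X}$. Interaction: given a tournament $\mathrel{W}$, start from $R_0=\varnothing$; in each period with $R_{t-1}$ not total the chair offers a pair $\{x,y\}$ unranked by $R_{t-1}$, the winner is $x$ if $x\mathrel{W}y$ and $y$ otherwise, and $R_t$ is the transitive closure of $R_{t-1}\cup\{(\text{winner},\text{loser})\}$; stop when $R_t$ is total. A strategy assigns to each non-terminal history (sequence of (winner, loser) pairs) a pair unranked at it; its outcome under $\mathrel{W}$ is the final ranking. A ranking is $\mathrel{W}$-feasible if it is the outcome under $\mathrel{W}$ of some strategy. $R$ is more aligned with $\succ$ than $R'$ if for all $x\succ y$, $xR'y$ implies $xRy$. A ranking is $\mathrel{W}$-unimprovable if no other $\mathrel{W}$-feasible ranking is more aligned with $\succ$. A strategy is regret-free if for every tournament $\mathrel{W}$ its outcome under $\mathrel{W}$ is $\mathrel{W}$-unimprovable. A ranking $R$ is $\mathrel{W}$-efficient if $x\succ y$ and $x\mathrel{W}y$ imply $xRy$; a strategy is efficient if for every tournament $\mathrel{W}$ its outcome under $\mathrel{W}$ is $\mathrel{W}$-efficient. *)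

From mathcomp Require Import all_boot.
Set Implicit Arguments. Unset Strict Implicit. Unset Printing Implicit Defensive.

Section Defs.
Variable X : finType.

Definition irreflexive_rel (R : rel X) := forall x, ~~ R x x.
Definition transitive_rel (R : rel X) := forall x y z, R x y -> R y z -> R x z.
Definition total_rel (R : rel X) := forall x y, x != y -> R x y || R y x.
Definition asymmetric_rel (R : rel X) := forall x y, R x y -> ~~ R y x.

Definition is_proto_ranking (R : rel X) := irreflexive_rel R /\ transitive_rel R.
Definition is_ranking (R : rel X) := is_proto_ranking R /\ total_rel R.
Definition is_tournament (W : rel X) := total_rel W /\ asymmetric_rel W.

(* A history is a sequence of (winner, loser) pairs. *)
Definition history := seq (X * X).

(* The relation R_t determined by a history: the transitive closure of the
   set of (winner, loser) pairs recorded so far (R_0 = empty). *)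
Definition rel_of (h : history) : rel X :=
  fun x y => [exists z, ((x, z) \in h) && connect (fun a b => (a, b) \in h) z y].

Definition unranked (R : rel X) (p : X * X) :=
  (p.1 != p.2) && ~~ R p.1 p.2 && ~~ R p.2 p.1.

(* A strategy assigns to each non-terminal history an unranked pair.
   (Option-valued so that strategies exist also when |X| <= 1; the value at
   terminal histories is irrelevant.) *)
Definition strategy := history -> option (X * X).
Definition is_strategy (s : strategy) :=
  forall h : history, ~ total_rel (rel_of h) ->
    exists p, s h = Some p /\ unranked (rel_of h) p.

Definition step (s : strategy) (W : rel X) (h : history) : history :=
  if [forall x, forall y, (x != y) ==> (rel_of h x y || rel_of h y x)] then h
  else match s h with
       | Some (x, y) => rcons h (if W x y then (x, y) else (y, x))
       | None => h
       end.

Definition run (s : strategy) (W : rel X) (n : nat) : history :=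
  iter n (step s W) [::].

Definition is_outcome (s : strategy) (W : rel X) (R : rel X) :=
  exists n, total_rel (rel_of (run s W n)) /\ R =2 rel_of (run s W n).

Definition feasible (W : rel X) (R : rel X) :=
  is_ranking R /\ exists s, is_strategy s /\ is_outcome s W R.

Definition more_aligned (pref : rel X) (R R' : rel X) :=
  forall x y, pref x y -> R' x y -> R x y.

Definition unimprovable (pref W : rel X) (R : rel X) :=
  forall R', feasible W R' -> more_aligned pref R' R -> R' =2 R.

Definition regret_free (pref : rel X) (s : strategy) :=
  forall W, is_tournament W ->
    exists R, is_outcome s W R /\ unimprovable pref W R.

Definition efficient_ranking (pref W : rel X) (R : rel X) :=
  forall x y, pref x y -> W x y -> R x y.

Definition efficient (pref : rel X) (s : strategy) :=
  forall W, is_tournament W ->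
    exists R, is_outcome s W R /\ efficient_ranking pref W R.

End Defs.

From mathcomp Require Import all_boot.
Set Implicit Arguments. Unset Strict Implicit. Unset Printing Implicit Defensive.

(* The chair runs insertion sort along her own preference: she inserts her most
   preferred alternative b that is not yet ranked against all the alternatives
   she prefers to it, comparing b with the lowest-ranked of those whose relation
   to b is still open.  Then transitivity never ranks y above x when she prefers
   x to y and x beats y, so the outcome is efficient.
   An efficient ranking R is unimprovable: a feasible R' is the transitive
   closure of W-edges, and an edge a -> b missing from R has b preferred to a and
   ranked above a by R, so an R' more aligned than R would contain both a -> b
   and b -> a.  Hence R' is contained in R, and a ranking contained in another
   one equals it. *)

Section MaximalElement.
Variables (T : finType) (r : rel T).
Hypotheses (r_irr : irreflexive_rel r) (r_trans : transitive_rel r).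

Lemma exists_maximal (P : pred T) :
  (exists x, P x) -> exists2 x, P x & forall y, P y -> ~~ r y x.
Proof.
move=> [x0 Px0]; have [x Px xmin] := arg_minnP (fun x => #|[pred z | r z x]|) Px0.
exists x => // y Py; apply/negP => ryx.
have: [pred z | r z y] \proper [pred z | r z x].
  apply/properP; split; last by exists y; rewrite !inE ?ryx ?r_irr.
  by apply/subsetP => z; rewrite !inE => rzy; apply: r_trans rzy ryx.
by move/proper_card; rewrite ltnNge xmin.
Qed.

End MaximalElement.

Section Relations.
Variable X : finType.
Implicit Types R : rel X.

Lemma totalP R :
  reflect (total_rel R) [forall x, forall y, (x != y) ==> R x y || R y x].
Proof.
apply: (iffP forallP) => [tot x y | tot x].
  by move/forallP: (tot x) => /(_ y)/implyP.
by apply/forallP => y; apply/implyP/tot.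
Qed.

Lemma not_total_unranked R : ~ total_rel R -> exists p, unranked R p.
Proof.
move=> /totalP; rewrite negb_forall => /existsP[x]; rewrite negb_forall.
case/existsP=> y; rewrite negb_imply negb_or => /andP[nxy /andP[nRxy nRyx]].
by exists (x, y); rewrite /unranked /= nxy nRxy.
Qed.

Lemma unranked_sym R x y : unranked R (x, y) = unranked R (y, x).
Proof. by rewrite /unranked /= eq_sym -!andbA [~~ R x y && _]andbC. Qed.

Lemma asymmetric_irreflexive R : asymmetric_rel R -> irreflexive_rel R.
Proof. by move=> asym x; apply/negP => Rxx; case/negP: (asym _ _ Rxx). Qed.

Lemma subrel_total_eq R R' :
  total_rel R' -> is_proto_ranking R -> subrel R' R -> R' =2 R.
Proof.
move=> R'tot [Rirr Rtr] sub x y; apply/idP/idP => [/sub // | Rxy].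
have nxy : x != y by apply: contraTneq Rxy => ->; apply: Rirr.
case/orP: (R'tot x y nxy) => // /sub Ryx.
by move: (Rirr x); rewrite (Rtr _ _ _ Rxy Ryx).
Qed.

End Relations.

Section TransitiveClosure.
Variable X : finType.
Implicit Types (h : history X) (x y w l : X).

Lemma rel_of_nil x y : rel_of [::] x y = false.
Proof. by apply/existsP => -[]. Qed.

Lemma rel_of_edge h x y : (x, y) \in h -> rel_of h x y.
Proof. by move=> hxy; apply/existsP; exists y; rewrite hxy connect0. Qed.

Lemma rel_of_trans h : transitive_rel (rel_of h).
Proof.
move=> x y z /existsP[x1 /andP[xx1 x1y]] /existsP[y1 /andP[yy1 y1z]].
apply/existsP; exists x1; rewrite xx1 (connect_trans x1y) //.
by apply: connect_trans y1z; apply: connect1.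
Qed.

Lemma rel_of_min h (P : rel X) :
  (forall x y, (x, y) \in h -> P x y) -> transitive_rel P -> subrel (rel_of h) P.
Proof.
move=> Pedge Ptr x y /existsP[z /andP[/Pedge Pxz /connectP[p zp ->]]].
elim: p z Pxz zp => [|w p IHp] z Pxz //= /andP[zw wp].
exact: IHp (Ptr _ _ _ Pxz (Pedge _ _ zw)) wp.
Qed.

Lemma rel_of_rcons_sub h p : subrel (rel_of h) (rel_of (rcons h p)).
Proof.
apply: rel_of_min (@rel_of_trans _) => x y hxy.
by apply: rel_of_edge; rewrite mem_rcons in_cons hxy orbT.
Qed.

Lemma rel_of_rcons h w l x y :
  rel_of (rcons h (w, l)) x y =
  rel_of h x y || ((x == w) || rel_of h x w) && ((l == y) || rel_of h l y).
Proof.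
have to_w x' y' : rel_of h x' y' -> (y' == w) || rel_of h y' w ->
    (x' == w) || rel_of h x' w.
  by move=> hxy /orP[/eqP <- | /(rel_of_trans hxy) ->]; rewrite ?hxy orbT.
have from_l x' y' : (l == x') || rel_of h l x' -> rel_of h x' y' ->
    (l == y') || rel_of h l y'.
  by move=> /orP[/eqP -> | /rel_of_trans lx] hxy; rewrite ?hxy ?lx ?orbT.
apply/idP/idP.
- move: x y; apply: rel_of_min => [x y | x y z].
    by rewrite mem_rcons in_cons => /orP[/eqP[-> ->] | /rel_of_edge ->];
      rewrite ?eqxx ?orbT.
  move=> /orP[hxy | /andP[wx ly]] /orP[hyz | /andP[wy lz]].
  + by rewrite (rel_of_trans hxy hyz).
  + by rewrite (to_w _ _ hxy wy) lz orbT.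
  + by rewrite wx (from_l _ _ ly hyz) orbT.
  + by rewrite wx lz orbT.
- have hwl : rel_of (rcons h (w, l)) w l.
    by apply: rel_of_edge; rewrite mem_rcons mem_head.
  case/orP=> [/rel_of_rcons_sub // | /andP[wx ly]].
  have {}hwl : rel_of (rcons h (w, l)) x l.
    case/orP: wx => [/eqP -> // | /(rel_of_rcons_sub (w, l)) Rxw].
    exact: rel_of_trans Rxw hwl.
  case/orP: ly => [/eqP <- // | /(rel_of_rcons_sub (w, l)) Rly].
  exact: rel_of_trans hwl Rly.
Qed.

Lemma rel_of_rcons_irreflexive h w l :
  irreflexive_rel (rel_of h) -> unranked (rel_of h) (w, l) ->
  irreflexive_rel (rel_of (rcons h (w, l))).
Proof.
move=> irr /andP[/andP[/= nwl _] nRlw] x.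
rewrite rel_of_rcons (negbTE (irr x)) /=; apply/negP.
case/andP=> /orP[/eqP -> | Rxw] /orP[/eqP lx | Rlx].
- by rewrite lx eqxx in nwl.
- by rewrite Rlx in nRlw.
- by rewrite lx Rxw in nRlw.
- by rewrite (rel_of_trans Rlx Rxw) in nRlw.
Qed.

End TransitiveClosure.

Section Interaction.
Variables (X : finType) (s : strategy X) (W : rel X).
Hypothesis s_ok : is_strategy s.
Implicit Types h : history X.

Lemma runS n : run s W n.+1 = step s W (run s W n).
Proof. by []. Qed.

Lemma step_total h : total_rel (rel_of h) -> step s W h = h.
Proof. by rewrite /step => /totalP ->. Qed.

Lemma step_offer h x y : ~ total_rel (rel_of h) -> s h = Some (x, y) ->
  step s W h = rcons h (if W x y then (x, y) else (y, x)).
Proof. by rewrite /step => /totalP/negbTE -> ->. Qed.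

Lemma step_played h : ~ total_rel (rel_of h) ->
  exists x y, unranked (rel_of h) (x, y) /\
              step s W h = rcons h (if W x y then (x, y) else (y, x)).
Proof.
move=> ntot; have [[x y] [sh xy]] := s_ok ntot.
by exists x, y; rewrite (step_offer ntot sh).
Qed.

Lemma run_irreflexive n : irreflexive_rel (rel_of (run s W n)).
Proof.
elim: n => [x | n IHn]; first by rewrite rel_of_nil.
rewrite runS; have [tot | ntot] := totalP (rel_of (run s W n)).
  by rewrite step_total.
have [x [y [xy ->]]] := step_played ntot.
by case: ifP => _; apply: rel_of_rcons_irreflexive; rewrite // -unranked_sym.
Qed.

Lemma run_edges n x y : total_rel W -> (x, y) \in run s W n -> W x y.
Proof.
move=> Wtot; elim: n => // n IHn; rewrite runS.
have [tot | ntot] := totalP (rel_of (run s W n)); first by rewrite step_total.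
have [x' [y' [/andP[/andP[/= nxy _] _] ->]]] := step_played ntot.
rewrite mem_rcons in_cons => /orP[|/IHn //].
case: ifP => [Wxy /eqP[-> ->] // | nWxy /eqP[-> ->]].
by move: (Wtot _ _ nxy); rewrite nWxy.
Qed.

Lemma run_terminates : exists n, total_rel (rel_of (run s W n)).
Proof.
pose ranked h := #|[pred p : X * X | rel_of h p.1 p.2]|.
have grows n : total_rel (rel_of (run s W n)) \/ n <= ranked (run s W n).
  elim: n => [|n IHn]; first by right.
  rewrite runS; have [tot | ntot] := totalP (rel_of (run s W n)).
    by left; rewrite step_total.
  right; case: IHn => // IHn; apply: leq_ltn_trans IHn _.
  have [x [y [/andP[/andP[_ nRxy] nRyx] ->]]] := step_played ntot.
  set wl := if W x y then (x, y) else (y, x).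
  apply: proper_card; apply/properP; split.
    by apply/subsetP => -[u v]; rewrite !inE; apply: rel_of_rcons_sub.
  exists wl; rewrite !inE; last by rewrite /wl; case: ifP.
  by rewrite /wl; case: ifP => _; apply: rel_of_edge; rewrite mem_rcons mem_head.
exists #|{: X * X}|.+1; case: (grows #|{: X * X}|.+1) => // big.
by move: (leq_trans big (max_card _)); rewrite ltnn.
Qed.

End Interaction.

Section EfficientRegretFree.
Variables (X : finType) (pref : rel X).
Hypothesis pref_total : total_rel pref.

Lemma outcome_ranking (s : strategy X) W R :
  is_strategy s -> is_outcome s W R -> is_ranking R.
Proof.
move=> s_ok [n [tot RE]]; split; last by move=> x y; rewrite !RE; apply: tot.
split=> [x | x y z]; rewrite ?RE; first exact: run_irreflexive.
exact: rel_of_trans.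
Qed.

Lemma efficient_unimprovable W R : is_tournament W ->
  is_ranking R -> efficient_ranking pref W R -> unimprovable pref W R.
Proof.
move=> [Wtot Wasym] [Rpr Rtot] Reff R' [[[R'irr R'tr] R'tot]].
move=> [s' [s'_ok [n [_ R'E]]]] aligned.
apply: (subrel_total_eq R'tot Rpr) => x y; rewrite R'E.
apply: (rel_of_min _ (proj2 Rpr)) => a b ab.
have Wab : W a b := run_edges s'_ok Wtot ab.
have R'ab : R' a b by rewrite R'E; apply: rel_of_edge.
have nab : a != b by apply: contraTneq Wab => ->; apply: asymmetric_irreflexive.
case/orP: (Rtot a b nab) => // Rba.
case/orP: (pref_total nab) => [pab | pba]; first exact: Reff.
by move: (R'irr a); rewrite (R'tr _ _ _ R'ab (aligned _ _ pba Rba)).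
Qed.

Lemma efficient_regret_free (s : strategy X) :
  is_strategy s -> efficient pref s -> regret_free pref s.
Proof.
move=> s_ok s_eff W Wt; have [R [out Reff]] := s_eff W Wt.
exists R; split=> //; apply: efficient_unimprovable Reff => //.
exact: outcome_ranking out.
Qed.

End EfficientRegretFree.

Section InsertionSort.
Variables (X : finType) (pref : rel X).
Hypotheses (pref_irr : irreflexive_rel pref) (pref_trans : transitive_rel pref)
  (pref_total : total_rel pref).
Implicit Types h : history X.

Definition settled h e := [forall f, pref f e ==> rel_of h e f || rel_of h f e].
Definition ready h c := [forall e, pref e c ==> settled h e].
Definition insertee h b := ~~ settled h b && ready h b.
Definition candidate h b a := pref a b && unranked (rel_of h) (a, b).
Definition lowest_candidate h b a :=
  candidate h b a && [forall a', candidate h b a' ==> ~~ rel_of h a a'].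
Definition insertion_offer h (p : X * X) :=
  insertee h p.2 && lowest_candidate h p.2 p.1.

(* The second branch is only reached on histories whose relation has a cycle,
   which never arise in a run; it keeps the strategy well defined there. *)
Definition insertion_strategy : strategy X := fun h =>
  if [pick p | insertion_offer h p] is Some p then Some p
  else [pick p | unranked (rel_of h) p].

Lemma insertion_strategy_ok : is_strategy insertion_strategy.
Proof.
move=> h /not_total_unranked[p0 p0_unranked]; rewrite /insertion_strategy.
case: pickP => [p /and3P[_ /andP[_ p_unranked] _] | _]; first by exists p.
by case: pickP => [p | /(_ p0)]; [exists p | rewrite p0_unranked].
Qed.

Lemma settled_rcons h p e : settled h e -> settled (rcons h p) e.
Proof.
move/forallP=> se; apply/forallP => f; apply/implyP => pfe.
by case/orP: (implyP (se f) pfe) => /(rel_of_rcons_sub p) ->; rewrite ?orbT.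
Qed.

Lemma ready_rcons h p c : ready h c -> ready (rcons h p) c.
Proof.
move/forallP=> rc; apply/forallP => e; apply/implyP => pec.
exact: settled_rcons (implyP (rc e) pec).
Qed.

Lemma insertion_offer_exists h :
  irreflexive_rel (rel_of h) -> ~ total_rel (rel_of h) ->
  exists p, insertion_offer h p.
Proof.
move=> irr /not_total_unranked[[x y] /andP[/andP[/= nxy nRxy] nRyx]].
have unsettled : exists b, ~~ settled h b.
  case/orP: (pref_total nxy) => [pxy | pyx]; [exists y | exists x];
    rewrite negb_forall; apply/existsP; [exists x | exists y];
    by rewrite negb_imply negb_or ?pxy ?pyx nRxy nRyx.
have [b b_unsettled b_top] := exists_maximal pref_irr pref_trans unsettled.
have b_ready : ready h b.
  by apply/forallP => e; apply/implyP => peb; apply: contraLR peb => /b_top.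
have candidates : exists a, candidate h b a.
  move: b_unsettled; rewrite negb_forall => /existsP[a].
  rewrite negb_imply negb_or => /and3P[pab nRba nRab]; exists a.
  rewrite /candidate /unranked /= pab nRab nRba !andbT.
  by apply: contraTneq pab => ->; apply: pref_irr.
have [a a_cand a_low] := exists_maximal (r := fun u v => rel_of h v u) irr
  (fun x y z Ryx Rzy => rel_of_trans Rzy Ryx) candidates.
exists (a, b); rewrite /insertion_offer /insertee /lowest_candidate /=.
by rewrite b_unsettled b_ready a_cand; apply/forallP => a'; apply/implyP/a_low.
Qed.

Lemma insertion_strategy_offer h :
  irreflexive_rel (rel_of h) -> ~ total_rel (rel_of h) ->
  exists a b, insertion_offer h (a, b) /\ insertion_strategy h = Some (a, b).
Proof.
move=> irr ntot; rewrite /insertion_strategy.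
case: pickP => [[a b] offer | none]; first by exists a, b.
by have [p] := insertion_offer_exists irr ntot; rewrite none.
Qed.

Definition no_reversal (W : rel X) h :=
  forall x y, pref x y -> W x y -> ~~ rel_of h y x.
Definition ranked_ready h := forall c d, rel_of h c d -> ready h c && ready h d.

Lemma ranked_ready_rcons h w l :
  ranked_ready h -> ready h w -> ready h l -> ranked_ready (rcons h (w, l)).
Proof.
move=> rr rw rl c d; rewrite rel_of_rcons => /orP[/rr/andP[rc rd] | /andP[wc ld]].
  by rewrite !ready_rcons.
apply/andP; split; apply: ready_rcons.
  by case/orP: wc => [/eqP -> // | /rr/andP[]].
by case/orP: ld => [/eqP <- // | /rr/andP[]].
Qed.

Section InsertionStep.
Variables (W : rel X) (h : history X) (a b : X).
Hypotheses (W_asym : asymmetric_rel W) (h_irr : irreflexive_rel (rel_of h))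
  (h_no_rev : no_reversal W h) (h_ready : ranked_ready h)
  (b_insertee : insertee h b) (a_lowest : lowest_candidate h b a).

Lemma ranked_weakly_below c d : rel_of h c d -> (c == b) || pref c b.
Proof.
move=> /h_ready/andP[c_ready _]; have [// | ncb] := eqVneq c b.
case/orP: (pref_total ncb) => //= pbc; case/andP: b_insertee => /negP[].
exact: (implyP (forallP c_ready b)).
Qed.

Lemma upper_chain x y : pref y b -> pref x y -> rel_of h x y || rel_of h y x.
Proof.
move=> pyb pxy; case/andP: b_insertee => _ /forallP/(_ y)/implyP/(_ pyb).
by move/forallP/(_ x)/implyP/(_ pxy); rewrite orbC.
Qed.

Lemma no_reversal_rcons_up : no_reversal W (rcons h (a, b)).
Proof.
case/andP: a_lowest => /andP[pab /andP[_ nRba]] _.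
move=> x y pxy Wxy; rewrite rel_of_rcons negb_or (h_no_rev pxy Wxy) /=.
apply/negP => /andP[ya bx].
have pyb : pref y b.
  case/orP: ya => [/eqP -> // | Rya].
  case/orP: (ranked_weakly_below Rya) => // /eqP eyb.
  by rewrite -eyb Rya in nRba.
have Rbx : rel_of h b x.
  case/orP: bx => // /eqP ebx; have pxb := pref_trans pxy pyb.
  by rewrite -ebx (negbTE (pref_irr b)) in pxb.
case/orP: (upper_chain pyb pxy) => [Rxy | Ryx]; last first.
  by case/negP: (h_no_rev pxy Wxy).
have Rby := rel_of_trans Rbx Rxy.
case/orP: ya => [/eqP eya | Rya]; first by rewrite -eya Rby in nRba.
by rewrite (rel_of_trans Rby Rya) in nRba.
Qed.

Lemma no_reversal_rcons_down : W b a -> no_reversal W (rcons h (b, a)).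
Proof.
move=> Wba; case/andP: a_lowest => /andP[_ /andP[/andP[_ nRab] _]] a_low.
move=> x y pxy Wxy; rewrite rel_of_rcons negb_or (h_no_rev pxy Wxy) /=.
apply/negP => /andP[yb ax].
have eyb : y = b.
  case/orP: yb => [/eqP // | Ryb].
  have pyb : pref y b.
    case/orP: (ranked_weakly_below Ryb) => // /eqP eyb.
    by rewrite eyb (negbTE (h_irr b)) in Ryb.
  case/orP: (upper_chain pyb pxy) => [Rxy | Ryx]; last first.
    by case/negP: (h_no_rev pxy Wxy).
  have Rxb := rel_of_trans Rxy Ryb.
  case/orP: ax => [/eqP eax | Rax]; first by rewrite eax Rxb in nRab.
  by rewrite (rel_of_trans Rax Rxb) in nRab.
subst y; case/orP: ax => [/eqP eax | Rax].
  by rewrite -eax in Wxy; case/negP: (W_asym Wba).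
have x_cand : candidate h b x.
  rewrite /candidate /unranked /= pxy (h_no_rev pxy Wxy) andbT /=.
  apply/andP; split; first by apply: contraTneq pxy => ->; apply: pref_irr.
  by apply: contraNN nRab; apply: rel_of_trans.
by move/forallP/(_ x)/implyP/(_ x_cand): a_low; rewrite Rax.
Qed.

End InsertionStep.

Lemma insertion_step_invariant W h :
  is_tournament W -> irreflexive_rel (rel_of h) ->
  no_reversal W h -> ranked_ready h ->
  no_reversal W (step insertion_strategy W h) /\
  ranked_ready (step insertion_strategy W h).
Proof.
move=> [Wtot Wasym] irr no_rev rr.
have [tot | ntot] := totalP (rel_of h); first by rewrite step_total.
have [a [b [/andP[b_ins a_low] offer]]] := insertion_strategy_offer irr ntot.
rewrite (step_offer _ ntot offer).
have [/andP[pab /andP[/andP[nab _] _]] _] := andP a_low.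
have b_ready : ready h b := (andP b_ins).2.
have a_ready : ready h a.
  apply/forallP => e; apply/implyP => pea.
  exact: (implyP (forallP b_ready e) (pref_trans pea pab)).
case: ifP => [_ | nWab]; split; try exact: ranked_ready_rcons.
  exact: no_reversal_rcons_up.
apply: no_reversal_rcons_down => //.
by move: (Wtot _ _ nab); rewrite nWab.
Qed.

Lemma insertion_run_invariant W n : is_tournament W ->
  no_reversal W (run insertion_strategy W n) /\
  ranked_ready (run insertion_strategy W n).
Proof.
move=> Wt; elim: n => [|n [no_rev rr]]; first by split=> x y; rewrite rel_of_nil.
rewrite runS; apply: insertion_step_invariant => //.
exact: run_irreflexive _ insertion_strategy_ok n.
Qed.

Lemma insertion_strategy_efficient : efficient pref insertion_strategy.
Proof.
move=> W Wt; have [n tot] := run_terminates W insertion_strategy_ok.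
exists (rel_of (run insertion_strategy W n)); split; first by exists n.
move=> x y pxy Wxy; have [no_rev _] := insertion_run_invariant n Wt.
have nxy : x != y by apply: contraTneq pxy => ->; apply: pref_irr.
by case/orP: (tot x y nxy) => // Ryx; case/negP: (no_rev _ _ pxy Wxy).
Qed.

End InsertionSort.

Theorem corollary2 (X : finType) (pref : rel X) :
  is_ranking pref ->
  exists s : strategy X,
    is_strategy s /\ efficient pref s /\ regret_free pref s.
Proof.
move=> [[pref_irr pref_trans] pref_total].
have s_eff := insertion_strategy_efficient pref_irr pref_trans pref_total.
have s_ok := insertion_strategy_ok pref.
exists (insertion_strategy pref); split=> //; split=> //.
exact: efficient_regret_free pref_total _ s_ok s_eff.
Qed.
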